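(* Let $\mathcal{X}=\langle x_1,\dots,x_n\rangle$ be an input sequence of $n$ colored items in which exactly $\sigma$ distinct colors appear, and let $o_1\ge o_2$ denote the number of occurrences in $\mathcal{X}$ of the most frequent and of the second most frequent color, respectively. Let $k\ge 1$ be a buffer size satisfying at least one of $$2\left\lceil \frac{k}{\sigma}\right\rceil > o_1 \qquad\text{or}\qquad \left\lceil \frac{k}{\sigma}\right\rceil > o_2 .$$ Process $\mathcal{X}$ with a buffer of size $k$ using the Most-Frequent-Color strategy (described in the context), and assume that every color selection during the run is made at a moment when the buffer contains exactly $k$ items. Then the output sequence is optimal: the items of each color appear consecutively in the output, i.e. the output consists of exactly $\sigma$ maximal monochromatic blocks (equivalently, it has exactly $\sigma-1$ color changes, the minimum possible).
   Context: Reordering buffer model (uniform cost): items of the input sequence arrive one at a time, in order, and are inserted into a buffer that can hold at most $k$ items. At any time there is a current output color. The strategy is lazy: whenever the buffer contains items of the current output color, these items are removed from the buffer and appended to the output sequence, and vacancies are refilled from the input (newly arriving items of the current output color are likewise output immediately). When the buffer contains no item of the current output color, a new output color is selected among the colors present in the buffer, and all buffer items of that color are appended to the output. The Most-Frequent-Color strategy always selects, as the new output color, a color having the largest number of items currently in the buffer (ties broken arbitrarily). The process continues until the input and the buffer are both empty. The cost of the output is the number of pairs of consecutive output items with different colors; any output must contain at least $\sigma$ maximal monochromatic blocks. *)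

From mathcomp Require Import all_boot.
Set Implicit Arguments. Unset Strict Implicit. Unset Printing Implicit Defensive.

(* State of the reordering buffer process:
   remaining input, buffer content (a multiset, stored as a seq),
   current output color (None before the first selection), output so far. *)
Record state := St { inp : seq nat; buf : seq nat; cur : option nat; out : seq nat }.

(* One atomic step of the lazy Most-Frequent-Color strategy with buffer size k.
   The boolean label is true iff the step is a color selection. *)
Inductive mfc_step (k : nat) : state -> state -> bool -> Prop :=
| mfc_emit i b c o :
    c \in b ->
    mfc_step k (St i b (Some c) o) (St i (rem c b) (Some c) (rcons o c)) false
| mfc_fill x i b cc o :
    (forall c, cc = Some c -> c \notin b) ->
    size b < k ->
    mfc_step k (St (x :: i) b cc o) (St i (x :: b) cc o) false
    (* vacancies are refilled from the input; an arriving item of the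
       current color is then output immediately by mfc_emit *)
| mfc_select i b cc o c :
    (forall c', cc = Some c' -> c' \notin b) ->
    (k <= size b \/ i = [::]) ->
    c \in b ->
    (forall d, count_mem d b <= count_mem c b) ->
    mfc_step k (St i b cc o) (St i b (Some c) o) true.

Inductive full_run (k : nat) : state -> state -> Prop :=
| full_run_refl s : full_run k s s
| full_run_step s s' t sel :
    mfc_step k s s' sel ->
    (sel = true -> size (buf s) = k) ->
    full_run k s' t ->
    full_run k s t.

Definition init_state (X : seq nat) : state := St X [::] None [::].

Definition final_state (s : state) : Prop := inp s = [::] /\ buf s = [::].

Definition nblocks (s : seq nat) : nat :=
  match s with
  | [::] => 0
  | x :: t => (count (fun p => p.1 != p.2) (zip (x :: t) t)).+1
  end.

Definition ncolors (X : seq nat) : nat := size (undup X).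

Definition occs (X : seq nat) : seq nat :=
  sort geq [seq count_mem c X | c <- undup X].

(* o1 = occurrences of most frequent color, o2 = of the second most
   frequent color (0 if there is none) *)
Definition o1 (X : seq nat) : nat := nth 0 (occs X) 0.
Definition o2 (X : seq nat) : nat := nth 0 (occs X) 1.

Definition ceil_div (a b : nat) : nat := (a + b.-1) %/ b.

From mathcomp Require Import all_boot zify.
Set Implicit Arguments. Unset Strict Implicit. Unset Printing Implicit Defensive.

(* Optimality of Most-Frequent-Color when every selection is made with a full
   buffer.  Write σ for the number of colors of X and m = ⌈k/σ⌉.

   1. A selection with a full buffer picks a color c with at least m items in
      the buffer (pigeonhole: k items spread over at most σ colors).
   2. The hypothesis "o1 < 2m or o2 < m" says that X has no heavy pair: no
      color with 2m occurrences together with another color with m.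
   3. Invariant of the run: every finished color has at least m items in the
      output and the current color has at least m items in output + buffer.
      If a color c were selected a second time, it would have m items already
      output and m more in the buffer, i.e. 2m occurrences, while the color
      abandoned just before has m occurrences: a heavy pair.  Hence every
      selection picks a fresh color and each color forms a single block. *)

Lemma sorted_geq_nth (s : seq nat) v j :
  sorted geq s -> j < count (fun x => v <= x) s -> v <= nth 0 s j.
Proof.
elim: s j => [|x t IH] [|j] //= Hs Hcnt.
- case: (leqP v x) Hcnt => // Hvx.
  have /allP Hle := order_path_min (fun a b c h1 h2 => leq_trans h2 h1) Hs.
  suff -> : count (fun y => v <= y) t = 0 by [].
  apply/eqP; rewrite -leqn0 leqNgt -has_count; apply/hasP => -[y /Hle /= Hyx Hvy].
  by move: (leq_trans Hvy Hyx); rewrite leqNgt Hvx.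
- apply: IH; first exact: path_sorted Hs.
  by move: Hcnt; case: (v <= x) => /=; lia.
Qed.

Lemma occs_nth_ge (X cs : seq nat) v j :
  uniq cs -> j < size cs -> {subset cs <= X} ->
  (forall c, c \in cs -> v <= count_mem c X) -> v <= nth 0 (occs X) j.
Proof.
move=> Hu Hj HcsX Hcs; apply: sorted_geq_nth.
  by apply: sort_sorted => a b; exact: leq_total.
rewrite /occs (permP (permEl (perm_sort _ _))) count_map -size_filter.
apply: leq_trans Hj (uniq_leq_size Hu _) => c Hc.
by rewrite mem_filter /= Hcs // mem_undup HcsX.
Qed.

Definition no_heavy_pair (X : seq nat) (m : nat) : Prop :=
  forall c c', c \in X -> c' \in X -> c != c' ->
  2 * m <= count_mem c X -> m <= count_mem c' X -> False.

Lemma no_heavy_pairP X m : o1 X < 2 * m \/ o2 X < m -> no_heavy_pair X m.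
Proof.
move=> Hcond c c' HcX Hc'X Hcc' Hc Hc'.
case: Hcond; apply/negP; rewrite -leqNgt.
- apply: (@occs_nth_ge X [:: c]) => // d; rewrite inE => /eqP -> //.
- apply: (@occs_nth_ge X [:: c; c']) => //; first by rewrite /= inE Hcc'.
  + by move=> d; rewrite !inE => /orP[] /eqP ->.
  + move=> d; rewrite !inE => /orP[] /eqP -> //; lia.
Qed.

Lemma count_changes_rcons (y x : nat) t :
  count (fun p : nat * nat => p.1 != p.2) (zip (y :: rcons t x) (rcons t x)) =
  count (fun p : nat * nat => p.1 != p.2) (zip (y :: t) t) + (last y t != x).
Proof.
elim: t y => [|z t IH] y /=; first by rewrite addn0.
by rewrite IH addnA.
Qed.

Lemma nblocks_rcons_new s x : x \notin s -> nblocks (rcons s x) = (nblocks s).+1.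
Proof.
case: s => [|y t] //= Hx; rewrite count_changes_rcons.
case: eqP => [Heq|_]; last by rewrite addn1.
by move: (mem_last y t); rewrite Heq (negbTE Hx).
Qed.

Lemma nblocks_rcons_last s x : s != [::] -> last 0 s = x -> nblocks (rcons s x) = nblocks s.
Proof.
case: s => [|y t] //= _ <-.
by rewrite count_changes_rcons eqxx addn0.
Qed.

Lemma size_undup_rcons (s : seq nat) x :
  size (undup (rcons s x)) = size (undup s) + (x \notin s).
Proof.
elim: s => [|y s IH] //=; rewrite mem_rcons !inE.
case: (eqVneq y x) => [->|Hyx] /=.
  by case Hx: (x \in s) => /=; rewrite IH Hx ?addn0 ?addn1.
by case: (y \in s) => /=; rewrite IH.
Qed.

Lemma size_le_bounded_counts (u b : seq nat) M :
  {subset b <= u} -> (forall d, count_mem d b <= M) -> size b <= size u * M.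
Proof.
elim: u b => [|y u IH] b Hsub Hc.
  by case: b Hsub Hc => // z b /(_ z (mem_head _ _)).
rewrite /= mulSn -(count_predC (pred1 y) b).
apply: leq_add; first exact: Hc.
rewrite -size_filter; apply: IH => [z|d].
  rewrite mem_filter => /andP[Hzy /Hsub]; rewrite inE.
  by case/orP => // /eqP Hz; rewrite /= Hz eqxx in Hzy.
rewrite count_filter; apply: leq_trans (Hc d).
by apply: sub_count => z /andP[].
Qed.

Lemma ceil_div_gt0 a b : 0 < a -> 0 < b -> 0 < ceil_div a b.
Proof. by move=> Ha Hb; rewrite /ceil_div divn_gt0 //; lia. Qed.

(* By pigeonhole, a most frequent item of b occurs at least ⌈|b|/|u|⌉ times;
   this is the share of the color chosen at a selection with a full buffer. *)
Lemma most_frequent_share (u b : seq nat) c :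
  {subset b <= u} -> c \in b -> (forall d, count_mem d b <= count_mem c b) ->
  ceil_div (size b) (size u) <= count_mem c b.
Proof.
move=> Hsub Hcb Hmax.
have Hu : 0 < size u by case: u Hsub => // /(_ c Hcb).
have Hb := size_le_bounded_counts Hsub Hmax.
rewrite /ceil_div -ltnS ltn_divLR //; lia.
Qed.

Record mfc_inv (X : seq nat) (m : nat) (s : state) : Prop := MfcInv {
  inv_perm : perm_eq X (out s ++ buf s ++ inp s);
  inv_start : cur s = None -> out s = [::];
  inv_blocks : nblocks (out s) = size (undup (out s));
  inv_last : forall c, cur s = Some c -> c \notin out s \/ last 0 (out s) = c;
  inv_done : forall d, d \in out s -> cur s <> Some d -> m <= count_mem d (out s);
  inv_cur : forall c, cur s = Some c -> m <= count_mem c (out s) + count_mem c (buf s)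
}.

Lemma count_mem_split c (X o b i : seq nat) : perm_eq X (o ++ b ++ i) ->
  count_mem c X = count_mem c o + count_mem c b + count_mem c i.
Proof. by move/permP => ->; rewrite !count_cat addnA. Qed.

(* Outputting an item of the current color preserves the invariant: the
   item either starts a new block or extends the last one. *)
Lemma inv_emit X m i b c o :
  c \in b -> mfc_inv X m (St i b (Some c) o) ->
  mfc_inv X m (St i (rem c b) (Some c) (rcons o c)).
Proof.
move=> Hcb [/= HP HN HB HL HM HC].
have Hperm := perm_to_rem Hcb.
split => //= [|||d|c' [<-]].
- apply: perm_trans HP _; rewrite cat_rcons perm_cat2l -cat_cons perm_cat2r.
  exact: Hperm.
- rewrite size_undup_rcons; case Hco: (c \in o) => /=.
    rewrite addn0 nblocks_rcons_last //; last by case: (HL c erefl); rewrite ?Hco.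
    by apply: contraTneq Hco => ->.
  by rewrite nblocks_rcons_new ?Hco // HB addn1.
- by move=> c' [<-]; right; rewrite last_rcons.
- rewrite mem_rcons inE => /orP[/eqP -> //|Hd] Hne.
  by apply: leq_trans (HM d Hd Hne) _; rewrite -cats1 count_cat leq_addr.
- by move: (HC c erefl); rewrite ((permP Hperm) _) -cats1 count_cat /= eqxx; lia.
Qed.

Lemma inv_fill X m x i b cc o :
  mfc_inv X m (St (x :: i) b cc o) -> mfc_inv X m (St i (x :: b) cc o).
Proof.
case=> /= HP HN HB HL HM HC; split => //= [|c Hc].
- apply: perm_trans HP _; rewrite perm_cat2l.
  by apply/permP => p /=; rewrite !count_cat /=; lia.
- by apply: leq_trans (HC c Hc) _; rewrite leq_add2l leq_addl.
Qed.

Lemma selected_color_fresh X m i b cc o c :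
  0 < m -> no_heavy_pair X m -> (forall c', cc = Some c' -> c' \notin b) ->
  c \in b -> m <= count_mem c b -> mfc_inv X m (St i b cc o) -> c \notin o.
Proof.
move=> Hm Hfree Hcc Hcb Hcnt [/= HP HN _ _ HM HC]; apply/negP => Hco.
case: cc Hcc HN HM HC => [c'|] Hcc HN HM HC; last by rewrite HN in Hco.
have Hc'b := Hcc c' erefl.
have Hne : c != c' by apply: contraNneq Hc'b => <-.
have Hcount_c : 2 * m <= count_mem c X.
  have : m <= count_mem c o by apply: HM Hco _ => -[/eqP]; rewrite eq_sym (negbTE Hne).
  by rewrite (count_mem_split c HP); lia.
have Hcount_c' : m <= count_mem c' X.
  rewrite (count_mem_split c' HP).
  exact: leq_trans (HC c' erefl) (leq_addr _ _).
apply: (Hfree c c') => //.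
- by rewrite (perm_mem HP) !mem_cat Hcb orbT.
- by rewrite -has_pred1 has_count; lia.
Qed.

Lemma inv_select X m i b cc o c :
  0 < m -> no_heavy_pair X m -> (forall c', cc = Some c' -> c' \notin b) ->
  c \in b -> m <= count_mem c b ->
  mfc_inv X m (St i b cc o) -> mfc_inv X m (St i b (Some c) o).
Proof.
move=> Hm Hfree Hcc Hcb Hcnt Hinv.
have Hfresh := selected_color_fresh Hm Hfree Hcc Hcb Hcnt Hinv.
case: Hinv => /= HP HN HB _ HM HC; split => //= [c' [<-]|d Hd Hne|c' [<-]].
- by left.
- case: cc Hcc HN HM HC => [c'|] Hcc HN HM HC; last by rewrite HN in Hd.
  case: (eqVneq d c') => [->|Hdc]; last by apply: HM => // -[E]; rewrite E eqxx in Hdc.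
  by move: (HC c' erefl); rewrite (count_memPn (Hcc c' erefl)) addn0.
- exact: leq_trans Hcnt (leq_addl _ _).
Qed.

Lemma step_inv X k s s' sel :
  0 < k -> no_heavy_pair X (ceil_div k (ncolors X)) ->
  mfc_step k s s' sel -> (sel = true -> size (buf s) = k) ->
  mfc_inv X (ceil_div k (ncolors X)) s -> mfc_inv X (ceil_div k (ncolors X)) s'.
Proof.
move=> Hk Hfree []; clear s s' sel.
- by move=> i b c o Hcb _; exact: inv_emit.
- by move=> x i b cc o _ _ _; exact: inv_fill.
move=> i b cc o c Hcc _ Hcb Hmax /(_ erefl) /= Hsize Hinv.
have HbX : {subset b <= undup X}.
  by move=> z Hz; rewrite mem_undup (perm_mem (inv_perm Hinv)) !mem_cat Hz orbT.
have Hcolors : 0 < ncolors X by rewrite /ncolors; case: (undup X) (HbX c Hcb).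
apply: inv_select Hinv => //; first exact: ceil_div_gt0.
by rewrite -Hsize; exact: most_frequent_share HbX Hcb Hmax.
Qed.

Lemma run_inv X k s t :
  0 < k -> no_heavy_pair X (ceil_div k (ncolors X)) -> full_run k s t ->
  mfc_inv X (ceil_div k (ncolors X)) s -> mfc_inv X (ceil_div k (ncolors X)) t.
Proof.
move=> Hk Hfree; elim => // {}s s' {}t sel Hst Hsel _ IH Hinv.
exact/IH/(step_inv Hk Hfree Hst Hsel).
Qed.

Lemma inv_final X m fin : final_state fin -> mfc_inv X m fin ->
  nblocks (out fin) = ncolors X.
Proof.
case=> Hi Hb [HP _ HB _ _ _]; rewrite HB /ncolors.
rewrite Hi Hb !cats0 in HP.
apply/perm_size/uniq_perm; rewrite ?undup_uniq // => z.
by rewrite !mem_undup (perm_mem HP).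
Qed.

Theorem lemma1 (X : seq nat) (k : nat) (fin : state) :
  1 <= k ->
  (o1 X < 2 * ceil_div k (ncolors X) \/ o2 X < ceil_div k (ncolors X)) ->
  full_run k (init_state X) fin ->
  final_state fin ->
  nblocks (out fin) = ncolors X.
Proof.
move=> Hk Hcond Hrun Hfin.
apply: (inv_final Hfin); apply: (run_inv Hk (no_heavy_pairP Hcond) Hrun).
by split.
Qed.
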